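(* Let $\bar A=\{A_i\}$ be a partition with $A_i\in(P_i,Q_i)$ such that every $A_i$ satisfies the short cycle property, i.e. $T_iA_i\in(Q_{\rho(i)},A_{\rho(i)+1})$ and $T_{i-1}A_i\in(A_{\theta(i-1)},P_{\theta(i-1)+1})$. Put $B_i=T_{\sigma(i-1)}A_{\sigma(i-1)}$ and $C_i=T_{\sigma(i+1)}A_{\sigma(i+1)+1}$. Then for indices $i,j$ related by $\sigma(j+1)=\sigma(i-1)-1$, \[ T_jC_j=T_iB_i\in[B_{\rho(i)+1},C_{\theta(i)}]=[B_{\rho(j)},C_{\theta(j)-1}]. \]
   Context: Setting. Fix $g\ge 2$; indices are mod $8g-4$. Let $\mathcal F$ be the regular hyperbolic $(8g-4)$-gon in the unit disk centered at $0$ with all interior angles $\pi/2$, sides labeled $1,\dots,8g-4$ counterclockwise, side $i$ joining vertices $V_i$ and $V_{i+1}$. The complete geodesic extending side $i$ goes from $P_i$ (beyond $V_i$) to $Q_{i+1}$ (beyond $V_{i+1}$) on the unit circle; counterclockwise order $P_1,Q_1,P_2,Q_2,\dots,P_{8g-4},Q_{8g-4}$. $\sigma(i)=4g-i$ ($i$ odd), $\sigma(i)=2-i$ ($i$ even), $\rho(i)=\sigma(i)+1$, $\theta(i)=\sigma(i)-1$. $T_i$ is the Möbius transformation mapping side $i$ onto side $\sigma(i)$, with isometric circle the geodesic $P_iQ_{i+1}$, mapped onto the geodesic $Q_{\sigma(i)+1}P_{\sigma(i)}$, inside to outside. Arcs $[A,B]$ etc. are counterclockwise from $A$ to $B$.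 *)

(* concrete reals R, points of the plane as R * R
   (x, y) <-> x + i y in the complex plane. *)
From Stdlib Require Import Reals ZArith Lra.
Open Scope R_scope.

Definition point := (R * R)%type.

Definition rot (t : R) (p : point) : point :=
  (cos t * fst p - sin t * snd p, sin t * fst p + cos t * snd p).

(** Number of sides N = 8g - 4 (as an integer and as a real). *)
Definition Nz (g : Z) : Z := (8 * g - 4)%Z.
Definition Nr (g : Z) : R := IZR (Nz g).

(** Index maps (indices are integers, read mod N; all maps below are
    compatible with reduction mod N since N is even). *)
Definition sigma (g i : Z) : Z := if Z.odd i then (4 * g - i)%Z else (2 - i)%Z.
Definition rho (g i : Z) : Z := (sigma g i + 1)%Z.
Definition theta (g i : Z) : Z := (sigma g i - 1)%Z.

(** Geometry of the regular N-gon with right angles centred at 0.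
    Side i lies on the geodesic (circle orthogonal to the unit circle)
    whose Euclidean centre lies in the direction phi i = 2 pi i / N.
    With cos(beta) = sqrt(cos(2 pi/N)), sin(beta) = sqrt(1 - cos(2pi/N)),
    the centre is at distance 1/cos(beta), radius tan(beta); adjacent such
    circles meet orthogonally (interior angles pi/2). *)
Definition phi (g i : Z) : R := 2 * PI * IZR i / Nr g.
Definition cb (g : Z) : R := sqrt (cos (2 * PI / Nr g)).
Definition sb (g : Z) : R := sqrt (1 - cos (2 * PI / Nr g)).

(** Endpoints of the geodesic extending side i: P_i (beyond V_i) and
    Q_{i+1} (beyond V_{i+1}); hence Q_i is the endpoint of side i-1. *)
Definition Ppt (g i : Z) : point := rot (phi g i) (cb g, - sb g).
Definition Qpt (g i : Z) : point := rot (phi g (i - 1)) (cb g, sb g).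

(** Isometric circle of T_i: the geodesic P_i Q_{i+1}. *)
Definition icenter (g i : Z) : point := rot (phi g i) (/ cb g, 0).
Definition iradius (g : Z) : R := sb g / cb g.

Definition inversion (c : point) (r : R) (z : point) : point :=
  let dx := fst z - fst c in
  let dy := snd z - snd c in
  let k := r ^ 2 / (dx ^ 2 + dy ^ 2) in
  (fst c + k * dx, snd c + k * dy).

Definition reflection (psi : R) (z : point) : point :=
  (cos (2 * psi) * fst z + sin (2 * psi) * snd z,
   sin (2 * psi) * fst z - cos (2 * psi) * snd z).

(** T_i : the (orientation-preserving) Moebius transformation of the disk
    with isometric circle P_i Q_{i+1}, mapping side i onto side sigma(i):
    inversion in its isometric circle followed by the reflection in the
    line through 0 bisecting the directions of sides i and sigma(i).
    It maps P_i to Q_{sigma(i)+1} and Q_{i+1} to P_{sigma(i)}. *)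
Definition T (g i : Z) (z : point) : point :=
  reflection ((phi g i + phi g (sigma g i)) / 2)
             (inversion (icenter g i) (iradius g) z).

Definition in_oarc (A B x : point) : Prop :=
  exists t, 0 < t <= 2 * PI /\ B = rot t A /\
    exists s, 0 < s < t /\ x = rot s A.

Definition in_carc (A B x : point) : Prop :=
  exists t, 0 <= t < 2 * PI /\ B = rot t A /\
    exists s, 0 <= s <= t /\ x = rot s A.

(* Everything is computed on the unit circle, [cis t = e^{it}].  With α = 2π/N and
   cos β = √(cos α), the ideal points are P_n = cis (nα - β) and Q_n = cis ((n-1)α + β),
   and T_n = rot (σ(n)α) ∘ S ∘ rot (-nα), where S z = (cz - 1)/(z - c), c = 1/cos β, is a
   Möbius map preserving the circle and the cyclic order of its points.

   Put k = σ(i-1).  Then i = ρ(k) and B_i = T_k A_k, while j ≡ θ(k-1) and C_j = T_{k-1} A_k,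
   so T_j C_j = T_i B_i is the cycle relation T_{ρ(k)} T_k = T_{θ(k-1)} T_{k-1}.  Conjugated
   by rotations it reads S R S R = R⁻¹ S R⁻¹ S with R = rot α, which holds because
   c² cos α = 1.  For the arc, the two short-cycle conditions of A_k are pushed forward:
   T_i maps T_k A_k ∈ (Q_i, A_{i+1}) below C_{θ(i)} = T_i A_{i+1}, and T_j maps
   T_{k-1} A_k ∈ (A_j, P_{j+1}) above B_{ρ(j)} = T_j A_j.  The index identity
   σ(θ(k-1)) ≡ ρ(ρ(k)) (mod N) gives B_{ρ(i)+1} = B_{ρ(j)} and C_{θ(i)} = C_{θ(j)-1},
   so the two arcs coincide. *)

From Stdlib Require Import Reals ZArith Lra Lia.
From Coquelicot Require Import Complex.
Open Scope R_scope.

Definition cis (t : R) : point := (cos t, sin t).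

Definition on_circle (z : point) : Prop := fst z * fst z + snd z * snd z = 1.

Lemma cos_sin_sq t : cos t * cos t + sin t * sin t = 1.
Proof. pose proof (sin2_cos2 t) as E. unfold Rsqr in E. lra. Qed.

Lemma rot_cis t u : rot t (cis u) = cis (u + t).
Proof. unfold rot, cis; simpl. rewrite cos_plus, sin_plus. f_equal; ring. Qed.

Lemma rot_rot s t z : rot s (rot t z) = rot (s + t) z.
Proof. unfold rot; simpl. rewrite cos_plus, sin_plus. f_equal; ring. Qed.

Lemma cis_add_2PI_mult t (k : Z) : cis (t + 2 * PI * IZR k) = cis t.
Proof.
  assert (Hnat : forall (s : R) (n : nat), cis (s + 2 * PI * INR n) = cis s).
  { intros s n. unfold cis.
    replace (s + 2 * PI * INR n) with (s + 2 * INR n * PI) by ring.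
    now rewrite cos_period, sin_period. }
  destruct (Z_le_gt_dec 0 k) as [Hk | Hk].
  - rewrite <- (Z2Nat.id k Hk), <- INR_IZR_INZ. apply Hnat.
  - rewrite <- (Hnat (t + 2 * PI * IZR k) (Z.to_nat (- k))), INR_IZR_INZ, Z2Nat.id by lia.
    rewrite opp_IZR. f_equal. ring.
Qed.

Lemma cis_add_2PI t : cis (t + 2 * PI) = cis t.
Proof. rewrite <- (cis_add_2PI_mult t 1). f_equal. ring. Qed.

Lemma rot_add_2PI_mult t (k : Z) z : rot (t + 2 * PI * IZR k) z = rot t z.
Proof.
  pose proof (cis_add_2PI_mult t k) as E. unfold cis in E. injection E as Ec Es.
  unfold rot. now rewrite Ec, Es.
Qed.

Lemma on_circle_cis t : on_circle (cis t).
Proof. apply cos_sin_sq. Qed.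

Lemma on_circle_rot t z : on_circle z -> on_circle (rot t z).
Proof.
  unfold on_circle, rot; simpl. intro Hz.
  transitivity ((cos t * cos t + sin t * sin t) * (fst z * fst z + snd z * snd z)); [ring|].
  now rewrite cos_sin_sq, Hz, Rmult_1_l.
Qed.

Lemma on_circle_cisP z : on_circle z -> exists t, z = cis t.
Proof.
  destruct z as [x y]. unfold on_circle, cis; simpl. intro Hz.
  assert (Hx : -1 <= x <= 1) by nra.
  assert (Hy : sqrt (1 - x²) = Rabs y).
  { rewrite <- sqrt_Rsqr_abs. f_equal. unfold Rsqr. lra. }
  destruct (Rle_or_lt 0 y) as [Hy0 | Hy0].
  - exists (acos x). rewrite cos_acos, sin_acos, Hy, Rabs_pos_eq by lra. reflexivity.
  - exists (- acos x). rewrite cos_neg, sin_neg, cos_acos, sin_acos, Hy, Rabs_left by lra.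
    f_equal. ring.
Qed.

Lemma cis_inj u v : cis u = cis v -> - (2 * PI) < u - v < 2 * PI -> u = v.
Proof.
  unfold cis. intros E Huv. injection E as Ec Es. pose proof PI_RGT_0.
  assert (Hsin : sin ((u - v) / 2) * sin ((u - v) / 2) = 0).
  { assert (Hc : cos (u - v) = 1) by (rewrite cos_minus, Ec, Es; apply cos_sin_sq).
    replace (u - v) with (2 * ((u - v) / 2)) in Hc by field.
    rewrite cos_2a_sin in Hc. lra. }
  destruct (Rtotal_order (u - v) 0) as [Hneg | [Hzero | Hpos]]; [exfalso | lra | exfalso].
  - assert (Hs : 0 < sin (- ((u - v) / 2))) by (apply sin_gt_0; lra).
    rewrite sin_neg in Hs. nra.
  - assert (Hs : 0 < sin ((u - v) / 2)) by (apply sin_gt_0; lra). nra.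
Qed.

Lemma cis_window t0 p : exists t, cis t = cis t0 /\ p <= t < p + 2 * PI.
Proof.
  pose proof PI_RGT_0.
  set (q := (t0 - p) / (2 * PI)).
  destruct (archimed q) as [Hup1 Hup2].
  exists (t0 + 2 * PI * IZR (- (up q - 1))). split; [apply cis_add_2PI_mult|].
  rewrite opp_IZR, minus_IZR.
  assert (t0 - p = 2 * PI * q) by (unfold q; field; lra).
  split; nra.
Qed.

Lemma inversion_rot p c0 r z :
  inversion (rot p c0) r z = rot p (inversion c0 r (rot (- p) z)).
Proof.
  unfold inversion, rot; cbn [fst snd]. rewrite cos_neg, sin_neg.
  set (x := fst z). set (y := snd z). set (c1 := fst c0). set (c2 := snd c0).
  pose proof (cos_sin_sq p) as Hp.
  replace ((cos p * x - - sin p * y - c1) ^ 2 + (- sin p * x + cos p * y - c2) ^ 2)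
    with ((x - (cos p * c1 - sin p * c2)) ^ 2 + (y - (sin p * c1 + cos p * c2)) ^ 2) by nra.
  set (k := r ^ 2 / _). f_equal.
  - transitivity (cos p * c1 - sin p * c2 + k * (x - (cos p * c1 - sin p * c2))
                  + k * x * (cos p * cos p + sin p * sin p - 1)); [rewrite Hp; ring | ring].
  - transitivity (sin p * c1 + cos p * c2 + k * (y - (sin p * c1 + cos p * c2))
                  + k * y * (cos p * cos p + sin p * sin p - 1)); [rewrite Hp; ring | ring].
Qed.

Lemma reflection_rot_Cconj psi w : reflection psi w = rot (2 * psi) (Cconj w).
Proof. unfold reflection, rot, Cconj; cbn [fst snd]. f_equal; ring. Qed.

Lemma Cconj_rot p w : Cconj (rot p w) = rot (- p) (Cconj w).
Proof. unfold rot, Cconj; cbn [fst snd]. rewrite cos_neg, sin_neg. f_equal; ring. Qed.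

Definition cross (u v : point) : R := fst u * snd v - snd u * fst v.

(* Twice the signed area of the triangle u v w: positive iff u, v, w are counterclockwise. *)
Definition orient (u v w : point) : R := cross u v + cross v w + cross w u.

Lemma orient_rot t u v w : orient (rot t u) (rot t v) (rot t w) = orient u v w.
Proof.
  unfold orient, cross, rot; simpl.
  transitivity ((cos t * cos t + sin t * sin t) * orient u v w); [unfold orient, cross; ring|].
  now rewrite cos_sin_sq, Rmult_1_l.
Qed.

Lemma orient_cis u v w :
  orient (cis u) (cis v) (cis w) = 4 * sin ((v - u) / 2) * sin ((w - v) / 2) * sin ((w - u) / 2).
Proof.
  assert (Hcross : forall s t, cross (cis s) (cis t) = sin (t - s))
    by (intros; unfold cross, cis; simpl; rewrite sin_minus; ring).
  unfold orient. rewrite !Hcross, form3.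
  replace (u - w) with (- (2 * ((w - u) / 2))) by field.
  rewrite sin_neg, sin_2a.
  replace ((v - u + (w - v)) / 2) with ((w - u) / 2) by field.
  transitivity (- sin ((w - u) / 2) * (2 * (cos ((w - u) / 2) - cos ((v - u - (w - v)) / 2))));
    [ring|].
  rewrite form2.
  replace (((w - u) / 2 - (v - u - (w - v)) / 2) / 2) with ((w - v) / 2) by field.
  replace (((w - u) / 2 + (v - u - (w - v)) / 2) / 2) with ((v - u) / 2) by field.
  ring.
Qed.

Lemma orient_cis_pos u v w : u < v -> v < w -> w < u + 2 * PI -> 0 < orient (cis u) (cis v) (cis w).
Proof.
  intros. rewrite orient_cis. pose proof PI_RGT_0.
  assert (0 < sin ((v - u) / 2)) by (apply sin_gt_0; lra).
  assert (0 < sin ((w - v) / 2)) by (apply sin_gt_0; lra).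
  assert (0 < sin ((w - u) / 2)) by (apply sin_gt_0; lra).
  assert (0 < sin ((v - u) / 2) * sin ((w - v) / 2)) by (apply Rmult_lt_0_compat; lra).
  assert (0 < sin ((v - u) / 2) * sin ((w - v) / 2) * sin ((w - u) / 2))
    by (apply Rmult_lt_0_compat; lra).
  lra.
Qed.

Lemma cis_between_of_orient z p1 p2 :
  on_circle z -> 0 < orient (cis p1) z (cis p2) -> 0 < p2 - p1 < 2 * PI ->
  exists p, z = cis p /\ p1 < p < p2.
Proof.
  intros Hz Hor Hp. destruct (on_circle_cisP z Hz) as [t0 ->].
  destruct (cis_window t0 p1) as [t [Et Ht]]. rewrite <- Et in Hor |- *.
  exists t. split; [reflexivity|].
  rewrite orient_cis in Hor. pose proof PI_RGT_0.
  assert (0 < sin ((p2 - p1) / 2)) by (apply sin_gt_0; lra).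
  assert (Ht1 : t <> p1).
  { intro E. rewrite E in Hor. replace ((p1 - p1) / 2) with 0 in Hor by field.
    rewrite sin_0 in Hor. lra. }
  assert (0 < sin ((t - p1) / 2)) by (apply sin_gt_0; lra).
  split; [lra|].
  destruct (Rlt_or_le t p2) as [Ht2 | Ht2]; [exact Ht2 | exfalso].
  assert (sin ((p2 - t) / 2) <= 0).
  { destruct (Req_dec t p2) as [-> | Hne].
    - replace ((p2 - p2) / 2) with 0 by field. rewrite sin_0. lra.
    - assert (Hs : 0 < sin (- ((p2 - t) / 2))) by (apply sin_gt_0; lra).
      rewrite sin_neg in Hs. lra. }
  assert (0 < sin ((t - p1) / 2) * sin ((p2 - p1) / 2)) by (apply Rmult_lt_0_compat; lra).
  nra.
Qed.

Lemma in_oarc_cis al ga x :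
  in_oarc (cis al) (cis ga) x -> 0 < ga - al < 2 * PI -> exists t, x = cis t /\ al < t < ga.
Proof.
  intros [t [Ht [Hga [s [Hs ->]]]]] Hal. rewrite rot_cis in Hga |- *.
  assert (ga = al + t) by (apply cis_inj; [exact Hga | lra]).
  exists (al + s). split; [reflexivity | lra].
Qed.

Lemma in_carc_cis b c t : b <= t <= c -> c < b + 2 * PI -> in_carc (cis b) (cis c) (cis t).
Proof.
  intros. exists (c - b). split; [lra|]. rewrite rot_cis. split.
  - f_equal. ring.
  - exists (t - b). split; [lra|]. rewrite rot_cis. f_equal. ring.
Qed.

Lemma rot_Cmult t z : rot t z = (cis t * z)%C.
Proof. unfold rot, cis, Cmult. cbn [fst snd]. f_equal; ring. Qed.

Lemma Cinv_cis t : (/ cis t)%C = cis (- t).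
Proof.
  unfold Cinv, cis. cbn [fst snd]. rewrite cos_neg, sin_neg.
  replace (cos t ^ 2 + sin t ^ 2) with 1 by (rewrite <- (cos_sin_sq t); ring).
  f_equal; field.
Qed.

Definition mob (c : R) (z : C) : C := ((RtoC c * z - 1) / (z - RtoC c))%C.

Section Mobius.

Variable c : R.
Hypothesis c_gt1 : 1 < c.

(* [|z - c|^2] for [z] on the unit circle. *)
Let dist2 (z : point) : R := c * c + 1 - 2 * c * fst z.

Lemma dist2_pos z : on_circle z -> 0 < dist2 z.
Proof.
  unfold on_circle, dist2. destruct z as [x y]; cbn [fst snd]. intro Hz.
  assert (x <= 1) by nra. nra.
Qed.

Lemma mob_coords z : on_circle z ->
  mob c z = ((2 * c - (c * c + 1) * fst z) / dist2 z, - ((c * c - 1) * snd z) / dist2 z).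
Proof.
  intro Hz. pose proof (dist2_pos z Hz) as Hd. revert Hd.
  unfold mob, dist2, on_circle in *. destruct z as [x y]; cbn [fst snd] in *.
  unfold Cdiv, Cinv, Cmult, Cminus, Cplus, Copp, RtoC; cbn [fst snd]. intro Hd.
  replace ((x + - c) ^ 2 + (y + - 0) ^ 2) with (c * c + 1 - 2 * c * x) by nra.
  f_equal; apply (Rmult_eq_reg_r (c * c + 1 - 2 * c * x)); try lra; field_simplify; try lra; nra.
Qed.

Lemma mob_on_circle z : on_circle z -> on_circle (mob c z).
Proof.
  intro Hz. pose proof (dist2_pos z Hz) as Hd. rewrite (mob_coords z Hz).
  unfold on_circle, dist2 in *. destruct z as [x y]; cbn [fst snd] in *.
  apply (Rmult_eq_reg_r ((c * c + 1 - 2 * c * x) ^ 2)); [|apply pow_nonzero; lra].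
  field_simplify; [|lra]. nra.
Qed.

Lemma mob_orient u v w : on_circle u -> on_circle v -> on_circle w ->
  0 < orient u v w -> 0 < orient (mob c u) (mob c v) (mob c w).
Proof.
  intros Hu Hv Hw Ho.
  pose proof (dist2_pos u Hu). pose proof (dist2_pos v Hv). pose proof (dist2_pos w Hw).
  rewrite (mob_coords u Hu), (mob_coords v Hv), (mob_coords w Hw).
  replace (orient _ _ _) with ((c * c - 1) ^ 3 * orient u v w / (dist2 u * dist2 v * dist2 w)).
  - apply Rdiv_lt_0_compat.
    + apply Rmult_lt_0_compat; [apply pow_lt; nra | exact Ho].
    + repeat apply Rmult_lt_0_compat; assumption.
  - unfold orient, cross, dist2 in *. destruct u, v, w; cbn [fst snd] in *.
    field. repeat split; lra.
Qed.

Lemma on_circle_sub_neq z : on_circle z -> (z - RtoC c)%C <> 0%C.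
Proof.
  unfold on_circle. destruct z as [x y]; cbn [fst snd]. intros Hz E.
  unfold Cminus, Cplus, Copp, RtoC in E. cbn [fst snd] in E. injection E as Ex _. nra.
Qed.

Lemma mob_cis u v : c * cos ((u - v) / 2) = cos ((u + v) / 2) -> mob c (cis u) = cis v.
Proof.
  intro Huv.
  assert (Hcos : c * (cos u + cos v) = 1 + cos (u + v)).
  { rewrite form1. transitivity (2 * (c * cos ((u - v) / 2)) * cos ((u + v) / 2)); [ring|].
    rewrite Huv. replace (u + v) with (2 * ((u + v) / 2)) at 3 by field.
    rewrite cos_2a_cos. ring. }
  assert (Hsin : c * (sin u + sin v) = sin (u + v)).
  { rewrite form3. transitivity (2 * (c * cos ((u - v) / 2)) * sin ((u + v) / 2)); [ring|].
    rewrite Huv. replace (u + v) with (2 * ((u + v) / 2)) at 3 by field.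
    rewrite sin_2a. ring. }
  assert (Hnum : (RtoC c * cis u - 1 = cis v * (cis u - RtoC c))%C).
  { unfold cis, Cmult, Cminus, Cplus, Copp, RtoC; cbn [fst snd].
    rewrite cos_plus in Hcos. rewrite sin_plus in Hsin. f_equal; lra. }
  unfold mob. rewrite Hnum. field. apply on_circle_sub_neq, on_circle_cis.
Qed.

Lemma mob_mul_cycle (W z : C) :
  W <> 0%C -> (RtoC c * RtoC c * W * W + RtoC c * RtoC c - 2 * W = 0)%C ->
  (z - RtoC c <> 0)%C -> (W * z - RtoC c <> 0)%C ->
  (W * mob c (W * z) - RtoC c <> 0)%C -> (/ W * mob c z - RtoC c <> 0)%C ->
  mob c (W * mob c (W * z)) = (/ W * mob c (/ W * mob c z))%C.
Proof.
  intros HW Hrel Hz HWz HL HR. unfold mob in *. set (k := RtoC c) in *.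
  set (E := (k * k * W * W + k * k - 2 * W)%C) in Hrel.
  set (DL := (k * W * z * (W - 1) + k * k - W)%C).
  set (DR := (k * W * z * (1 - W) + k * k * W * W - W)%C).
  assert (HDL : DL <> 0%C).
  { intro H0. apply HL.
    transitivity (DL / (W * z - k))%C; [unfold DL; field; exact HWz|].
    rewrite H0. field. exact HWz. }
  assert (HDR : DR <> 0%C).
  { intro H0. apply HR.
    transitivity (DR / (W * W * (z - k)))%C; [unfold DR; field; auto|].
    rewrite H0. field. auto. }
  assert (HcR : (k * z - 1 - k * (W * (z - k)))%C <> 0%C).
  { intro H0. apply HDR. transitivity (W * (k * z - 1 - k * (W * (z - k))))%C;
      [unfold DR; ring | rewrite H0; ring]. }
  (* Both sides are fractions linear in [z]; modulo [E = 0] their numerators and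
     denominators agree up to a common sign. *)
  transitivity ((z * (k * k * W * W - W) + k * (1 - W)) / DL)%C; [unfold DL; field; auto|].
  transitivity ((z * (k * k - W) + k * (W - 1)) / DR)%C; [|unfold DR; field; auto].
  replace (z * (k * k * W * W - W) + k * (1 - W))%C
    with (- (z * (k * k - W) + k * (W - 1)) + z * E)%C by (unfold E; ring).
  replace DR with (- DL + E)%C by (unfold DL, DR, E; ring).
  rewrite Hrel. field. auto.
Qed.

Lemma mob_rot_cycle t z : c * c * cos t = 1 -> on_circle z ->
  mob c (rot t (mob c (rot t z))) = rot (- t) (mob c (rot (- t) (mob c z))).
Proof.
  intros Hct Hz.
  assert (Hrel : (RtoC c * RtoC c * cis t * cis t + RtoC c * RtoC c - 2 * cis t = 0)%C).
  { unfold cis, Cminus, Cmult, Cplus, Copp, RtoC. cbn [fst snd]. f_equal.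
    - transitivity (2 * cos t * (c * c * cos t - 1)
                    - c * c * (cos t * cos t + sin t * sin t - 1)); [ring|].
      rewrite Hct, cos_sin_sq. ring.
    - transitivity (2 * sin t * (c * c * cos t - 1)); [ring|]. rewrite Hct. ring. }
  assert (HW : cis t <> RtoC 0).
  { intro H0. pose proof (on_circle_cis t) as Hc. rewrite H0 in Hc.
    unfold on_circle in Hc. cbn in Hc. lra. }
  rewrite !rot_Cmult, <- Cinv_cis.
  apply mob_mul_cycle; try assumption; apply on_circle_sub_neq; rewrite ?Cinv_cis, <- ?rot_Cmult;
    repeat first [apply on_circle_rot | apply mob_on_circle]; exact Hz.
Qed.

Lemma conj_inversion_mob r w : r ^ 2 = c * c - 1 -> on_circle w ->
  Cconj (inversion (c, 0) r w) = mob c w.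
Proof.
  intros Hr Hw. pose proof (dist2_pos w Hw) as Hd. rewrite (mob_coords w Hw).
  unfold Cconj, inversion, on_circle, dist2 in *. destruct w as [x y]; cbn [fst snd] in *.
  replace ((x - c) ^ 2 + (y - 0) ^ 2) with (c * c + 1 - 2 * c * x) by nra.
  rewrite Hr. f_equal; field; lra.
Qed.

End Mobius.

Lemma Z_periodic {X : Type} (N : Z) (F : Z -> X) :
  (forall i, F (i + N)%Z = F i) -> forall q i, F (i + N * q)%Z = F i.
Proof.
  intros HF.
  assert (Hnat : forall (n : nat) i, F (i + N * Z.of_nat n)%Z = F i).
  { induction n as [|n IH]; intro i.
    - f_equal. lia.
    - replace (i + N * Z.of_nat (Datatypes.S n))%Z with ((i + N * Z.of_nat n) + N)%Z by lia.
      rewrite HF. apply IH. }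
  intros q i. destruct (Z_le_gt_dec 0 q) as [Hq | Hq].
  - rewrite <- (Z2Nat.id q Hq). apply Hnat.
  - rewrite <- (Hnat (Z.to_nat (- q)) (i + N * q)%Z). f_equal. lia.
Qed.

Lemma sigma_odd g k : Z.odd k = true -> sigma g k = (4 * g - k)%Z.
Proof. intro Hk. unfold sigma. now rewrite Hk. Qed.

Lemma sigma_even g k : Z.odd k = false -> sigma g k = (2 - k)%Z.
Proof. intro Hk. unfold sigma. now rewrite Hk. Qed.

(* Fixes the parity of [k] and then evaluates every [sigma] whose argument is an affine
   expression in [k]. *)
Ltac sigma_cases k :=
  let Hk := fresh "Hk" in
  let parity := (repeat rewrite ?Z.odd_add, ?Z.odd_sub, ?Z.odd_mul, ?Z.odd_opp;
                 rewrite ?Hk; reflexivity) in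
  unfold rho, theta; destruct (Z.odd k) eqn:Hk;
  repeat match goal with
  | |- context [sigma ?g ?x] =>
      first [rewrite (sigma_odd g x) by parity | rewrite (sigma_even g x) by parity]
  end.

Lemma sigma_involutive g k : sigma g (sigma g k) = k.
Proof. sigma_cases k; lia. Qed.

Lemma sigma_add_Nz_mult g k q : sigma g (k + Nz g * q) = (sigma g k - Nz g * q)%Z.
Proof. unfold Nz. sigma_cases k; lia. Qed.

Lemma sigma_theta_rho_rho g k :
  exists q, sigma g (theta g (k - 1)) = (rho g (rho g k) + Nz g * q)%Z.
Proof. unfold Nz. sigma_cases k; [exists 1%Z | exists (-1)%Z]; lia. Qed.

Lemma rho_add_Nz_mult g k q : rho g (k + Nz g * q) = (rho g k - Nz g * q)%Z.
Proof. unfold rho. rewrite sigma_add_Nz_mult. lia. Qed.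

Lemma theta_add_Nz_mult g k q : theta g (k + Nz g * q) = (theta g k - Nz g * q)%Z.
Proof. unfold theta. rewrite sigma_add_Nz_mult. lia. Qed.

Lemma sigma_congr_theta g i j :
  ((sigma g (j + 1) - (sigma g (i - 1) - 1)) mod Nz g = 0)%Z ->
  exists q, j = (theta g (sigma g (i - 1) - 1) + Nz g * q)%Z.
Proof.
  intro Hij. apply Z.mod_divide in Hij as [q Hq]; [|unfold Nz; lia].
  assert (E : (j + 1 = sigma g (sigma g (i - 1) - 1 + Nz g * q))%Z)
    by (rewrite <- (sigma_involutive g (j + 1)); f_equal; lia).
  rewrite sigma_add_Nz_mult in E. exists (- q)%Z. unfold theta. lia.
Qed.

Definition alpha (g : Z) : R := 2 * PI / Nr g.
Definition beta (g : Z) : R := acos (cb g).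

Section Polygon.

Variable g : Z.
Hypothesis g_ge2 : (2 <= g)%Z.

Lemma Nr_ge12 : 12 <= Nr g.
Proof. unfold Nr, Nz. apply IZR_le. lia. Qed.

Lemma alpha_bounds : 0 < alpha g <= PI / 6.
Proof.
  pose proof Nr_ge12. pose proof PI_RGT_0. unfold alpha. split.
  - apply Rdiv_lt_0_compat; lra.
  - apply Rmult_le_reg_r with (Nr g); [lra|]. field_simplify; nra.
Qed.

Lemma phi_alpha n : phi g n = IZR n * alpha g.
Proof. pose proof Nr_ge12. unfold phi, alpha. field. lra. Qed.

Lemma Nz_alpha : IZR (Nz g) * alpha g = 2 * PI.
Proof. pose proof Nr_ge12. unfold alpha, Nr in *. field. lra. Qed.

Lemma cos_alpha_bounds : 0 < cos (alpha g) < 1.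
Proof.
  destruct alpha_bounds. pose proof PI_RGT_0. split.
  - apply cos_gt_0; lra.
  - rewrite <- cos_0. apply cos_decreasing_1; lra.
Qed.

Lemma cb_sq : cb g * cb g = cos (alpha g).
Proof. destruct cos_alpha_bounds. apply sqrt_sqrt. lra. Qed.

Lemma cb_bounds : 0 < cb g < 1.
Proof.
  destruct cos_alpha_bounds. pose proof cb_sq. split.
  - apply (sqrt_lt_R0 (cos (alpha g))). lra.
  - nra.
Qed.

Lemma cos_beta : cos (beta g) = cb g.
Proof. destruct cb_bounds. apply cos_acos. lra. Qed.

Lemma sin_beta : sin (beta g) = sb g.
Proof.
  destruct cb_bounds. unfold beta. rewrite sin_acos by lra. unfold Rsqr. now rewrite cb_sq.
Qed.

Lemma beta_bounds : alpha g / 2 < beta g < alpha g.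
Proof.
  destruct alpha_bounds, cos_alpha_bounds, cb_bounds. pose proof PI_RGT_0.
  pose proof cb_sq. pose proof cos_beta.
  assert (0 <= beta g <= PI) by apply acos_bound.
  split; apply cos_decreasing_0; try lra.
  - assert (Hhalf : cos (alpha g) = 2 * cos (alpha g / 2) * cos (alpha g / 2) - 1).
    { replace (alpha g) with (2 * (alpha g / 2)) at 1 by field. now rewrite cos_2a_cos. }
    assert (cos (alpha g / 2) < 1) by (rewrite <- cos_0; apply cos_decreasing_1; lra).
    assert (0 < cos (alpha g / 2)) by (apply cos_gt_0; lra).
    nra.
  - nra.
Qed.

Lemma Ppt_cis n : Ppt g n = cis (IZR n * alpha g - beta g).
Proof.
  unfold Ppt. rewrite phi_alpha, <- cos_beta, <- sin_beta, <- cos_neg, <- sin_neg.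
  fold (cis (- beta g)). rewrite rot_cis. f_equal. ring.
Qed.

Lemma Qpt_cis n : Qpt g n = cis (IZR n * alpha g - alpha g + beta g).
Proof.
  unfold Qpt. rewrite phi_alpha, <- cos_beta, <- sin_beta.
  fold (cis (beta g)). rewrite rot_cis, minus_IZR. f_equal. ring.
Qed.

Lemma inv_cb_gt1 : 1 < / cb g.
Proof. destruct cb_bounds. rewrite <- Rinv_1. apply Rinv_lt_contravar; lra. Qed.

Lemma inv_cb_sq_cos_alpha : / cb g * / cb g * cos (alpha g) = 1.
Proof. destruct cb_bounds. rewrite <- cb_sq. field. lra. Qed.

Lemma iradius_sq : iradius g ^ 2 = / cb g * / cb g - 1.
Proof.
  destruct cb_bounds, cos_alpha_bounds. unfold iradius.
  replace ((sb g / cb g) ^ 2) with ((sb g * sb g) / (cb g * cb g)) by (field; lra).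
  assert (Hsb : sb g * sb g = 1 - cos (alpha g)) by (apply sqrt_sqrt; lra).
  replace (/ cb g * / cb g) with (/ (cb g * cb g)) by (field; lra).
  rewrite Hsb, cb_sq. field. lra.
Qed.

Lemma T_rot_inversion n z :
  T g n z = rot (IZR (sigma g n) * alpha g)
              (Cconj (inversion (/ cb g, 0) (iradius g) (rot (- (IZR n * alpha g)) z))).
Proof.
  unfold T, icenter. rewrite reflection_rot_Cconj, inversion_rot, Cconj_rot, rot_rot, !phi_alpha.
  f_equal. field.
Qed.

Lemma T_mob n z : on_circle z ->
  T g n z = rot (IZR (sigma g n) * alpha g) (mob (/ cb g) (rot (- (IZR n * alpha g)) z)).
Proof.
  intro Hz. rewrite T_rot_inversion, conj_inversion_mob;
    [reflexivity | apply inv_cb_gt1 | apply iradius_sq | now apply on_circle_rot].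
Qed.

Lemma T_add_Nz_mult n q z : T g (n + Nz g * q) z = T g n z.
Proof.
  rewrite !T_rot_inversion, sigma_add_Nz_mult, minus_IZR, plus_IZR, mult_IZR.
  replace ((IZR (sigma g n) - IZR (Nz g) * IZR q) * alpha g)
    with (IZR (sigma g n) * alpha g + 2 * PI * IZR (- q)) by (rewrite opp_IZR, <- Nz_alpha; ring).
  replace (- ((IZR n + IZR (Nz g) * IZR q) * alpha g))
    with (- (IZR n * alpha g) + 2 * PI * IZR (- q)) by (rewrite opp_IZR, <- Nz_alpha; ring).
  now rewrite !rot_add_2PI_mult.
Qed.

Lemma T_on_circle n z : on_circle z -> on_circle (T g n z).
Proof.
  intro Hz. rewrite T_mob by exact Hz.
  apply on_circle_rot, mob_on_circle, on_circle_rot; [apply inv_cb_gt1 | exact Hz].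
Qed.

Lemma T_orient n u v w : on_circle u -> on_circle v -> on_circle w ->
  0 < orient u v w -> 0 < orient (T g n u) (T g n v) (T g n w).
Proof.
  intros Hu Hv Hw Ho. rewrite !T_mob by assumption. rewrite orient_rot.
  apply mob_orient; try apply on_circle_rot; try assumption; [apply inv_cb_gt1|].
  now rewrite orient_rot.
Qed.

Lemma T_cis_between n t1 t2 p1 p2 t :
  T g n (cis t1) = cis p1 -> T g n (cis t2) = cis p2 ->
  t1 < t < t2 -> t2 < t1 + 2 * PI -> 0 < p2 - p1 < 2 * PI ->
  exists p, T g n (cis t) = cis p /\ p1 < p < p2.
Proof.
  intros H1 H2 Ht Ht12 Hp.
  apply cis_between_of_orient; [apply T_on_circle, on_circle_cis | | exact Hp].
  rewrite <- H1, <- H2. apply T_orient; try apply on_circle_cis.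
  apply orient_cis_pos; lra.
Qed.

Lemma T_cis n th ps : mob (/ cb g) (cis (th - IZR n * alpha g)) = cis ps ->
  T g n (cis th) = cis (ps + IZR (sigma g n) * alpha g).
Proof.
  intro Hmob. rewrite T_mob by apply on_circle_cis.
  rewrite rot_cis. replace (th + - (IZR n * alpha g)) with (th - IZR n * alpha g) by ring.
  now rewrite Hmob, rot_cis.
Qed.

Lemma T_Qpt n : T g n (Qpt g n) = Qpt g (sigma g n + 2).
Proof.
  rewrite !Qpt_cis, (T_cis _ _ (beta g + alpha g)).
  - f_equal. rewrite plus_IZR. ring.
  - replace (IZR n * alpha g - alpha g + beta g - IZR n * alpha g) with (beta g - alpha g) by ring.
    apply mob_cis; [apply inv_cb_gt1|].
    replace ((beta g - alpha g - (beta g + alpha g)) / 2) with (- alpha g) by field.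
    replace ((beta g - alpha g + (beta g + alpha g)) / 2) with (beta g) by field.
    rewrite cos_neg, cos_beta, <- cb_sq. destruct cb_bounds. field. lra.
Qed.

Lemma T_Qpt_succ n : T g n (Qpt g (n + 1)) = Ppt g (sigma g n).
Proof.
  rewrite Qpt_cis, Ppt_cis, (T_cis _ _ (- beta g)).
  - f_equal. ring.
  - rewrite plus_IZR.
    replace ((IZR n + 1) * alpha g - alpha g + beta g - IZR n * alpha g) with (beta g) by ring.
    apply mob_cis; [apply inv_cb_gt1|].
    replace ((beta g - - beta g) / 2) with (beta g) by field.
    replace ((beta g + - beta g) / 2) with 0 by field.
    rewrite cos_0, cos_beta. destruct cb_bounds. field. lra.
Qed.

Lemma T_Ppt_succ n : T g n (Ppt g (n + 1)) = Ppt g (sigma g n - 1).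
Proof.
  rewrite !Ppt_cis, (T_cis _ _ (- (alpha g + beta g))).
  - f_equal. rewrite minus_IZR. ring.
  - rewrite plus_IZR.
    replace ((IZR n + 1) * alpha g - beta g - IZR n * alpha g) with (alpha g - beta g) by ring.
    apply mob_cis; [apply inv_cb_gt1|].
    replace ((alpha g - beta g - - (alpha g + beta g)) / 2) with (alpha g) by field.
    replace ((alpha g - beta g + - (alpha g + beta g)) / 2) with (- beta g) by field.
    rewrite cos_neg, cos_beta, <- cb_sq. destruct cb_bounds. field. lra.
Qed.

Lemma T_cycle k z : on_circle z ->
  T g (rho g k) (T g k z) = T g (theta g (k - 1)) (T g (k - 1) z).
Proof.
  intro Hz. unfold rho, theta.
  rewrite (T_mob (sigma g k + 1)), (T_mob (sigma g (k - 1) - 1)) by now apply T_on_circle.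
  rewrite (T_mob k), (T_mob (k - 1)), !rot_rot by exact Hz.
  replace (- (IZR (k - 1) * alpha g)) with (alpha g + - (IZR k * alpha g))
    by (rewrite minus_IZR; ring).
  replace (- (IZR (sigma g k + 1) * alpha g) + IZR (sigma g k) * alpha g) with (- alpha g)
    by (rewrite plus_IZR; ring).
  replace (- (IZR (sigma g (k - 1) - 1) * alpha g) + IZR (sigma g (k - 1)) * alpha g)
    with (alpha g) by (rewrite minus_IZR; ring).
  rewrite <- (rot_rot (alpha g)).
  rewrite (mob_rot_cycle _ inv_cb_gt1 _ _ inv_cb_sq_cos_alpha) by now apply on_circle_rot.
  rewrite rot_rot.
  destruct (sigma_theta_rho_rho g k) as [q Hq]. unfold rho, theta in Hq.
  rewrite Hq, !plus_IZR, mult_IZR.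
  replace ((IZR (sigma g (sigma g k + 1)) + 1 + IZR (Nz g) * IZR q) * alpha g + - alpha g)
    with (IZR (sigma g (sigma g k + 1)) * alpha g + 2 * PI * IZR q)
    by (rewrite <- Nz_alpha; ring).
  now rewrite rot_add_2PI_mult.
Qed.

End Polygon.

Definition Bpt (g : Z) (A : Z -> point) (n : Z) : point :=
  T g (sigma g (n - 1)) (A (sigma g (n - 1))).
Definition Cpt (g : Z) (A : Z -> point) (n : Z) : point :=
  T g (sigma g (n + 1)) (A (sigma g (n + 1) + 1)%Z).

Section Partition.

Variable g : Z.
Hypothesis g_ge2 : (2 <= g)%Z.
Variable A : Z -> point.
Hypothesis A_periodic : forall i, A (i + Nz g)%Z = A i.
Hypothesis A_in_side : forall i, in_oarc (Ppt g i) (Qpt g i) (A i).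
Hypothesis A_short_cycle : forall i,
  in_oarc (Qpt g (rho g i)) (A (rho g i + 1)%Z) (T g i (A i)) /\
  in_oarc (A (theta g (i - 1))) (Ppt g (theta g (i - 1) + 1)) (T g (i - 1) (A i)).

Lemma A_cis n : exists t, A n = cis t /\
  IZR n * alpha g - beta g < t < IZR n * alpha g - alpha g + beta g.
Proof.
  pose proof (beta_bounds g g_ge2). pose proof (alpha_bounds g g_ge2). pose proof PI_RGT_0.
  apply in_oarc_cis; [|lra]. rewrite <- Ppt_cis, <- Qpt_cis by exact g_ge2. apply A_in_side.
Qed.

Lemma A_on_circle n : on_circle (A n).
Proof. destruct (A_cis n) as [t [-> _]]. apply on_circle_cis. Qed.

Lemma T_arc_Qpt_A i x : in_oarc (Qpt g i) (A (i + 1)%Z) x ->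
  exists y c, T g i x = cis y /\ T g i (A (i + 1)%Z) = cis c /\
    IZR (sigma g i) * alpha g - alpha g - beta g < c < IZR (sigma g i) * alpha g - beta g /\
    IZR (sigma g i) * alpha g + alpha g + beta g < y < c + 2 * PI.
Proof.
  intro Hx.
  pose proof (beta_bounds g g_ge2). pose proof (alpha_bounds g g_ge2). pose proof PI_RGT_0.
  pose proof (T_Ppt_succ g g_ge2 i) as HP. pose proof (T_Qpt_succ g g_ge2 i) as HQ1.
  pose proof (T_Qpt g g_ge2 i) as HQ.
  rewrite !(Ppt_cis g g_ge2), plus_IZR, minus_IZR in HP.
  rewrite (Qpt_cis g g_ge2), (Ppt_cis g g_ge2), plus_IZR in HQ1.
  rewrite !(Qpt_cis g g_ge2), plus_IZR in HQ.
  destruct (A_cis (i + 1)) as [t [Ht Htb]]. rewrite plus_IZR in Htb.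
  rewrite Ht, Qpt_cis in Hx by exact g_ge2.
  apply in_oarc_cis in Hx as [u [-> Hu]]; [|lra].
  destruct (T_cis_between g g_ge2 i _ _ _ _ t HP HQ1) as [c [Hc Hcb]]; [lra.. |].
  rewrite <- (cis_add_2PI c) in Hc.
  destruct (T_cis_between g g_ge2 i _ _ _ _ u HQ Hc) as [y [Hy Hyb]]; [lra.. |].
  exists y, c. rewrite Ht, <- (cis_add_2PI c). repeat split; auto; lra.
Qed.

Lemma T_arc_A_Ppt j x : in_oarc (A j) (Ppt g (j + 1)) x ->
  exists y b, T g j x = cis y /\ T g j (A j) = cis b /\
    IZR (sigma g j) * alpha g + beta g < b < y /\
    y < IZR (sigma g j) * alpha g - alpha g - beta g + 2 * PI.
Proof.
  intro Hx.
  pose proof (beta_bounds g g_ge2). pose proof (alpha_bounds g g_ge2). pose proof PI_RGT_0.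
  pose proof (T_Ppt_succ g g_ge2 j) as HP.
  rewrite !(Ppt_cis g g_ge2), plus_IZR, minus_IZR in HP.
  rewrite <- (cis_add_2PI ((IZR (sigma g j) - 1) * alpha g - beta g)) in HP.
  destruct (A_cis j) as [t [Ht Htb]].
  rewrite Ht, (Ppt_cis g g_ge2), plus_IZR in Hx.
  apply in_oarc_cis in Hx as [w [-> Hw]]; [|lra].
  destruct (A_short_cycle j) as [Hj _]. unfold rho in Hj.
  destruct (A_cis (sigma g j + 1 + 1)) as [r [Hr Hrb]]. rewrite !plus_IZR in Hrb.
  rewrite Ht, Hr, (Qpt_cis g g_ge2), plus_IZR in Hj.
  apply in_oarc_cis in Hj as [b [Hb Hbb]]; [|lra].
  destruct (T_cis_between g g_ge2 j _ _ _ _ w Hb HP) as [y [Hy Hyb]]; [lra.. |].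
  exists y, b. rewrite Ht. repeat split; auto; lra.
Qed.

Lemma cycle_point_in_arc k :
  in_carc (T g (theta g (k - 1)) (A (theta g (k - 1)))) (T g (rho g k) (A (rho g k + 1)%Z))
          (T g (rho g k) (T g k (A k))).
Proof.
  pose proof (beta_bounds g g_ge2). pose proof (alpha_bounds g g_ge2). pose proof PI_RGT_0.
  destruct (A_short_cycle k) as [Hup Hlow].
  destruct (T_arc_Qpt_A _ _ Hup) as (y & c & Hy & Hc & Hcb & Hyb).
  destruct (T_arc_A_Ppt _ _ Hlow) as (y' & b & Hy' & Hb & Hbb & Hy'b).
  destruct (sigma_theta_rho_rho g k) as [q Hq].
  assert (Hangle : IZR (sigma g (theta g (k - 1))) * alpha g
                   = IZR (sigma g (rho g k)) * alpha g + alpha g + 2 * PI * IZR q).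
  { rewrite Hq, <- (Nz_alpha g g_ge2). unfold rho at 1. rewrite !plus_IZR, mult_IZR. ring. }
  assert (Hyy : y = y' + 2 * PI * IZR (- q)).
  { apply cis_inj; [|rewrite opp_IZR; lra].
    now rewrite cis_add_2PI_mult, <- Hy, <- Hy', (T_cycle g g_ge2) by apply A_on_circle. }
  rewrite Hy, Hb, Hc, <- (cis_add_2PI c), <- (cis_add_2PI_mult b (- q)).
  apply in_carc_cis; rewrite opp_IZR in *; lra.
Qed.

Lemma Bpt_rho n : Bpt g A (rho g n) = T g n (A n).
Proof. unfold Bpt, rho. now rewrite Z.add_simpl_r, sigma_involutive. Qed.

Lemma Cpt_theta n : Cpt g A (theta g n) = T g n (A (n + 1)%Z).
Proof. unfold Cpt, theta. now rewrite Z.sub_add, sigma_involutive. Qed.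

Lemma Bpt_add_Nz_mult n q : Bpt g A (n + Nz g * q) = Bpt g A n.
Proof.
  unfold Bpt. replace (n + Nz g * q - 1)%Z with (n - 1 + Nz g * q)%Z by lia.
  rewrite sigma_add_Nz_mult. replace (sigma g (n - 1) - Nz g * q)%Z
    with (sigma g (n - 1) + Nz g * - q)%Z by lia.
  now rewrite (T_add_Nz_mult g g_ge2), (Z_periodic _ _ A_periodic).
Qed.

Lemma Cpt_add_Nz_mult n q : Cpt g A (n + Nz g * q) = Cpt g A n.
Proof.
  unfold Cpt. replace (n + Nz g * q + 1)%Z with (n + 1 + Nz g * q)%Z by lia.
  rewrite sigma_add_Nz_mult. replace (sigma g (n + 1) - Nz g * q + 1)%Z
    with (sigma g (n + 1) + 1 + Nz g * - q)%Z by lia.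
  replace (sigma g (n + 1) - Nz g * q)%Z with (sigma g (n + 1) + Nz g * - q)%Z by lia.
  now rewrite (T_add_Nz_mult g g_ge2), (Z_periodic _ _ A_periodic).
Qed.

Lemma Bpt_rho_add_Nz_mult n q : Bpt g A (rho g (n + Nz g * q)) = T g n (A n).
Proof.
  rewrite rho_add_Nz_mult. replace (rho g n - Nz g * q)%Z with (rho g n + Nz g * - q)%Z by lia.
  now rewrite Bpt_add_Nz_mult, Bpt_rho.
Qed.

Lemma Bpt_rho_rho_succ k :
  Bpt g A (rho g (rho g k) + 1) = T g (theta g (k - 1)) (A (theta g (k - 1))).
Proof.
  destruct (sigma_theta_rho_rho g k) as [q Hq].
  assert (E : rho g (theta g (k - 1)) = (rho g (rho g k) + 1 + Nz g * q)%Z)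
    by (unfold rho at 1; lia).
  now rewrite <- Bpt_rho, E, Bpt_add_Nz_mult.
Qed.

Lemma Cpt_theta_theta_pred k q :
  Cpt g A (theta g (theta g (k - 1) + Nz g * q) - 1) = T g (rho g k) (A (rho g k + 1)%Z).
Proof.
  destruct (sigma_theta_rho_rho g k) as [q' Hq'].
  assert (E : (theta g (theta g (k - 1) + Nz g * q) - 1 = theta g (rho g k) + Nz g * (q' - q))%Z)
    by (rewrite theta_add_Nz_mult; unfold theta at 1 3; unfold rho in Hq' |- *; lia).
  now rewrite E, Cpt_add_Nz_mult, Cpt_theta.
Qed.

End Partition.

Theorem corollary4p2 (g : Z) (A : Z -> point) :
  (2 <= g)%Z ->
  (* A is a partition: indexed mod N *)
  (forall i : Z, A (i + Nz g)%Z = A i) ->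
  (* A_i in (P_i, Q_i) *)
  (forall i : Z, in_oarc (Ppt g i) (Qpt g i) (A i)) ->
  (* short cycle property for every A_i *)
  (forall i : Z,
      in_oarc (Qpt g (rho g i)) (A (rho g i + 1)%Z) (T g i (A i)) /\
      in_oarc (A (theta g (i - 1))) (Ppt g (theta g (i - 1) + 1)) (T g (i - 1) (A i))) ->
  let B := fun i : Z => T g (sigma g (i - 1)) (A (sigma g (i - 1))) in
  let C := fun i : Z => T g (sigma g (i + 1)) (A (sigma g (i + 1) + 1)%Z) in
  forall i j : Z,
    ((sigma g (j + 1) - (sigma g (i - 1) - 1)) mod Nz g = 0)%Z ->
    T g j (C j) = T g i (B i) /\
    in_carc (B (rho g i + 1)%Z) (C (theta g i)) (T g i (B i)) /\
    (forall x : point,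
        in_carc (B (rho g i + 1)%Z) (C (theta g i)) x <->
        in_carc (B (rho g j)) (C (theta g j - 1)%Z) x).
Proof.
  intros Hg Aper Hin Hsc B C i j Hij.
  change B with (Bpt g A). change C with (Cpt g A).
  destruct (sigma_congr_theta g i j Hij) as [q ->].
  set (k := sigma g (i - 1)).
  assert (Hi : i = rho g k) by (unfold rho, k; rewrite sigma_involutive; lia).
  clearbody k. subst i.
  rewrite (T_add_Nz_mult g Hg), Cpt_add_Nz_mult, Cpt_theta, Z.sub_add, Bpt_rho,
    Bpt_rho_rho_succ, Cpt_theta, Bpt_rho_add_Nz_mult, Cpt_theta_theta_pred by assumption.
  split; [|split].
  - symmetry. apply (T_cycle g Hg), (A_on_circle g Hg A Hin).
  - apply (cycle_point_in_arc g Hg A Hin Hsc).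
  - reflexivity.
Qed.
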